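(* For all sufficiently large $n$, there is a nonempty set $\mathcal{A}\subsetneq\{0,1\}^n$ such that every first-order sentence over $\tau_{\mathsf{string}}$ that is true in $\mathbf{B}_w$ for all $w\in\mathcal{A}$ and false in $\mathbf{B}_{w'}$ for all $w'\in\{0,1\}^n\setminus\mathcal{A}$ has at least $n/\log_2 n$ quantifiers.
   Context: Vocabulary $\tau_{\mathsf{string}}=\langle <, S;\ \mathsf{min},\mathsf{max}\rangle$ with $<$ binary, $S$ unary, $\mathsf{min},\mathsf{max}$ constants. A string $w=w_1\cdots w_n\in\{0,1\}^n$ ($n\geq 1$) is encoded by the structure $\mathbf{B}_w$ with universe $\{1,\dots,n\}$, $<$ the usual order, $S=\{i: w_i=1\}$, $\mathsf{min}=1$, $\mathsf{max}=n$. The number of quantifiers is the number of quantifier occurrences. *)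

From mathcomp Require Import all_boot.
From Stdlib Require Import Reals.

Set Implicit Arguments.
Unset Strict Implicit.
Unset Printing Implicit Defensive.

Inductive term : Type :=
  | TVar : nat -> term
  | TMin : term
  | TMax : term.

Inductive formula : Type :=
  | FEq  : term -> term -> formula
  | FLt  : term -> term -> formula
  | FS   : term -> formula
  | FNot : formula -> formula
  | FAnd : formula -> formula -> formula
  | FOr  : formula -> formula -> formula
  | FEx  : nat -> formula -> formula
  | FAll : nat -> formula -> formula.

Fixpoint nquant (phi : formula) : nat :=
  match phi with
  | FEq _ _ | FLt _ _ | FS _ => 0
  | FNot p => nquant p
  | FAnd p q | FOr p q => nquant p + nquant q
  | FEx _ p | FAll _ p => (nquant p).+1
  end.

Definition tvars (t : term) : seq nat :=
  match t with TVar x => [:: x] | _ => [::] end.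

Fixpoint fv (phi : formula) : seq nat :=
  match phi with
  | FEq t1 t2 | FLt t1 t2 => tvars t1 ++ tvars t2
  | FS t => tvars t
  | FNot p => fv p
  | FAnd p q | FOr p q => fv p ++ fv q
  | FEx x p | FAll x p => filter (fun y => y != x) (fv p)
  end.

Definition sentence (phi : formula) : Prop := fv phi = [::].

(* The structure B_w for w = w_1 ... w_n in {0,1}^n (w : n.-tuple bool,
   w_i = nth false w (i-1)): universe {1,...,n}, usual order,
   S = {i | w_i = 1}, min = 1, max = n. *)
Section Semantics.
Variables (n : nat) (w : n.-tuple bool).

Definition teval (a : nat -> nat) (t : term) : nat :=
  match t with
  | TVar x => a x
  | TMin => 1
  | TMax => n
  end.

Definition upd (a : nat -> nat) (x v : nat) : nat -> nat :=
  fun y => if y == x then v else a y.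

Fixpoint sat (a : nat -> nat) (phi : formula) : Prop :=
  match phi with
  | FEq t1 t2 => teval a t1 = teval a t2
  | FLt t1 t2 => teval a t1 < teval a t2
  | FS t => nth false w (teval a t).-1 = true
  | FNot p => ~ sat a p
  | FAnd p q => sat a p /\ sat a q
  | FOr p q => sat a p \/ sat a q
  | FEx x p => exists v, 1 <= v <= n /\ sat (upd a x v) p
  | FAll x p => forall v, 1 <= v <= n -> sat (upd a x v) p
  end.

(* Truth of a sentence in B_w (the assignment is irrelevant for sentences;
   we fix the assignment sending every variable to 1 = min). *)
Definition holds (phi : formula) : Prop := sat (fun _ => 1) phi.

End Semantics.

Definition defines (n : nat) (A : {set n.-tuple bool}) (phi : formula) : Prop :=
  sentence phi /\
  (forall w : n.-tuple bool, w \in A -> holds w phi) /\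
  (forall w : n.-tuple bool, w \notin A -> ~ holds w phi).

Definition log2R (x : R) : R := (ln x / ln 2)%R.

From mathcomp Require Import all_boot zify.
From Stdlib Require Import Reals Lra Classical FunctionalExtensionality.
(* [Reals] rebinds [^] on [nat] to [Nat.pow]. *)
Import ssrnat.

(* A formula with q quantifiers, evaluated in a context of k variables, is a
   Boolean combination of atoms and of its maximal quantified subformulas.  The
   atoms only see the key of the assignment: the order type and S-labels of the
   k assigned positions together with min and max, which takes fewer than
   (2k+4)^(k+2) values.  Each quantified subformula is in turn a function of the
   key one level up and of its own maximal quantified subformulas.  Counting
   these nested truth tables, at most 2^(4^(q+1) (2q+4)^(q+2)) subsets of
   {0,1}^n are definable with q quantifiers; for q < n / log2 n this is less than
   the 2^(2^n) - 2 nonempty proper subsets, so one of them is not. *)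

Set Implicit Arguments.
Unset Strict Implicit.
Unset Printing Implicit Defensive.

Section Denotation.
Variable n : nat.

Fixpoint satb (w : n.-tuple bool) (a : nat -> nat) (phi : formula) : bool :=
  match phi with
  | FEq t1 t2 => teval n a t1 == teval n a t2
  | FLt t1 t2 => teval n a t1 < teval n a t2
  | FS t => nth false w (teval n a t).-1
  | FNot p => ~~ satb w a p
  | FAnd p q => satb w a p && satb w a q
  | FOr p q => satb w a p || satb w a q
  | FEx x p => has (fun v => satb w (upd a x v) p) (iota 1 n)
  | FAll x p => all (fun v => satb w (upd a x v) p) (iota 1 n)
  end.

Lemma satP w phi a : sat w a phi <-> satb w a phi.
Proof.
elim: phi a => [t1 t2|t1 t2|t|p IH|p IHp q IHq|p IHp q IHq|x p IH|x p IH] a /=.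
- by split => [->|/eqP].
- by [].
- by [].
- by rewrite IH; split => /negP.
- by rewrite IHp IHq; split => [[-> ->]|/andP].
- by rewrite IHp IHq; split => [[->|->]|/orP]; rewrite ?orbT.
- split => [[v [Hv /IH Hs]]|/hasP [v]]; first by apply/hasP; exists v; rewrite ?mem_iota; lia.
  by rewrite mem_iota => Hv /IH Hs; exists v; split => //; lia.
- split => [H|/allP H v Hv]; last by apply/IH/H; rewrite mem_iota; lia.
  by apply/allP => v; rewrite mem_iota => Hv; apply/IH/H; lia.
Qed.

(* The point [(w, vals)] assigns [vals]'s i-th entry to the i-th variable of
   the context [ctx]; all other variables (and missing entries) get 1. *)
Fixpoint env (ctx vals : seq nat) : nat -> nat :=
  if ctx is x :: c then upd (env c (behead vals)) x (head 1 vals) else fun _ => 1.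

Definition den (ctx : seq nat) (phi : formula) (x : n.-tuple bool * seq nat) : bool :=
  satb x.1 (env ctx x.2) phi.

Fixpoint slot_vals (k : nat) (vals : seq nat) : seq nat :=
  if k is k'.+1 then head 1 vals :: slot_vals k' (behead vals) else [:: 1; n].

Lemma size_slot_vals k vals : size (slot_vals k vals) = k.+2.
Proof. by elim: k vals => //= k IH vals; rewrite IH. Qed.

Lemma mem_slot_vals k vals s : s < k.+2 -> nth 0 (slot_vals k vals) s \in slot_vals k vals.
Proof. by move=> Hs; apply: mem_nth; rewrite size_slot_vals. Qed.

Definition slot (ctx : seq nat) (t : term) : nat :=
  match t with
  | TVar y => index y ctx
  | TMin => size ctx
  | TMax => (size ctx).+1
  end.

Lemma slot_lt ctx t : slot ctx t < (size ctx).+2.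
Proof. by case: t => //= y; rewrite ltnS ltnW // ltnS index_size. Qed.

Lemma teval_slot ctx vals t :
  teval n (env ctx vals) t = nth 0 (slot_vals (size ctx) vals) (slot ctx t).
Proof.
case: t => [y||] /=; elim: ctx vals => //= x c IH vals.
by rewrite /upd eq_sym; case: (x == y).
Qed.

End Denotation.

Lemma count_sub_lt (T : eqType) (p p' : pred T) s z :
  subpred p p' -> z \in s -> p' z -> ~~ p z -> count p s < count p' s.
Proof.
move=> Hpp'; elim: s => //= y s IH; rewrite inE => /orP [/eqP <-|Hz] Hp' Hnp.
  by rewrite Hp' (negbTE Hnp) add0n add1n ltnS sub_count.
have := IH Hz Hp' Hnp; case Hy: (p y); first by rewrite (Hpp' _ Hy); lia.
by have := leq_b1 (p' y); lia.
Qed.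

Definition rank (L : seq nat) (v : nat) : nat := count (fun u => u < v) (undup L).

Lemma rank_lt L u v : u \in L -> u < v -> rank L u < rank L v.
Proof.
move=> Hu Huv; apply: (count_sub_lt (z := u)); rewrite ?mem_undup ?ltnn //.
by move=> z /= Hz; apply: ltn_trans Hz Huv.
Qed.

Lemma rank_lt_size L v : v \in L -> rank L v < size L.
Proof.
move=> Hv; apply: leq_trans (size_undup L); rewrite -count_predT.
by apply: (count_sub_lt (z := v)); rewrite ?mem_undup ?ltnn.
Qed.

Lemma ltn_rank L u v : u \in L -> v \in L -> (rank L u < rank L v) = (u < v).
Proof.
move=> Hu Hv; case: (ltngtP u v) => [H|H|->]; last by rewrite ltnn.
- exact: rank_lt.
- by have := rank_lt Hv H; lia.
Qed.

Lemma eqn_rank L u v : u \in L -> v \in L -> (rank L u == rank L v) = (u == v).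
Proof.
move=> Hu Hv; case: (ltngtP u v) => [H|H|->]; last by rewrite !eqxx.
- by have := rank_lt Hu H; lia.
- by have := rank_lt Hv H; lia.
Qed.

Lemma radix_inj T a b c d : a < T -> b < T -> a + T * c = b + T * d -> a = b /\ c = d.
Proof.
move=> Ha Hb E; have T0 : 0 < T by lia.
have Ec : c = d.
  move: (congr1 (divn^~ T) E).
  by rewrite !(addnC _ (T * _)) !(mulnC T) !divnMDl // !divn_small ?addn0.
by split => //; move: E; rewrite Ec => /addIn.
Qed.

Lemma double_addb_inj a (b : bool) c (d : bool) : a.*2 + b = c.*2 + d -> a = c /\ b = d.
Proof. by case: b; case: d => /=; lia. Qed.

Definition code_digits (M : nat) (ds : seq nat) : nat := foldr (fun d a => d + M * a) 0 ds.

Lemma code_digits_lt M ds : all (fun d => d < M) ds -> code_digits M ds < M ^ size ds.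
Proof. elim: ds => //= d ds IH /andP [Hd /IH]; rewrite expnS; nia. Qed.

Lemma code_digits_inj M ds1 ds2 : size ds1 = size ds2 ->
  all (fun d => d < M) ds1 -> all (fun d => d < M) ds2 ->
  code_digits M ds1 = code_digits M ds2 -> ds1 = ds2.
Proof.
elim: ds1 ds2 => [|d1 ds1 IH] [|d2 ds2] //= [Hs] /andP [H1 H1s] /andP [H2 H2s].
by case/radix_inj => // -> /IH ->.
Qed.

Definition digit_base (k : nat) : nat := (k.+2).*2.
Definition key_bound (k : nat) : nat := digit_base k ^ k.+2.

Definition slot_digit (w : seq bool) (L : seq nat) (s : nat) : nat :=
  (rank L (nth 0 L s)).*2 + nth false w (nth 0 L s).-1.

Section Key.
Variable n : nat.
Notation point := (n.-tuple bool * seq nat)%type.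

Definition key_digits (k : nat) (x : point) : seq nat :=
  mkseq (slot_digit x.1 (slot_vals n k x.2)) k.+2.

Definition key (k : nat) (x : point) : nat := code_digits (digit_base k) (key_digits k x).

Lemma key_digits_lt k x : all (fun d => d < digit_base k) (key_digits k x).
Proof.
apply/allP => d /mapP [s]; rewrite mem_iota add0n => Hs ->.
have := rank_lt_size (mem_slot_vals n x.2 Hs); rewrite size_slot_vals /digit_base /slot_digit.
by have := leq_b1 (nth false x.1 (nth 0 (slot_vals n k x.2) s).-1); lia.
Qed.

Lemma key_lt k x : key k x < key_bound k.
Proof. by have := code_digits_lt (key_digits_lt k x); rewrite size_mkseq. Qed.

Lemma key_slot_digit k x y : key k x = key k y -> forall s, s < k.+2 ->
  slot_digit x.1 (slot_vals n k x.2) s = slot_digit y.1 (slot_vals n k y.2) s.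
Proof.
move=> /(code_digits_inj _ (key_digits_lt k x) (key_digits_lt k y)).
rewrite !size_mkseq => /(_ erefl) E s Hs.
by rewrite -(nth_mkseq 0 (slot_digit x.1 _) Hs) -/(key_digits k x) E nth_mkseq.
Qed.

Definition atomic (phi : formula) : bool :=
  if phi is (FEq _ _ | FLt _ _ | FS _) then true else false.

Lemma den_atomic_key ctx phi x y : atomic phi ->
  key (size ctx) x = key (size ctx) y -> den ctx phi x = den ctx phi y.
Proof.
move=> Hphi /key_slot_digit Hd; have Ht t := double_addb_inj (Hd _ (slot_lt ctx t)).
have memL vs t := mem_slot_vals n vs (slot_lt ctx t).
case: phi Hphi => // [t1 t2|t1 t2|t] _; rewrite /den /= !teval_slot.
- rewrite -(eqn_rank (memL x.2 t1) (memL x.2 t2)) -(eqn_rank (memL y.2 t1) (memL y.2 t2)).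
  by rewrite (Ht t1).1 (Ht t2).1.
- rewrite -(ltn_rank (memL x.2 t1) (memL x.2 t2)) -(ltn_rank (memL y.2 t1) (memL y.2 t2)).
  by rewrite (Ht t1).1 (Ht t2).1.
- exact: (Ht t).2.
Qed.

End Key.

Section NormalForm.
Variable n : nat.
Notation point := (n.-tuple bool * seq nat)%type.

Definition quant_op (b : bool) (h : point -> bool) (x : point) : bool :=
  if b then has (fun z => h (x.1, z :: x.2)) (iota 1 n)
  else all (fun z => h (x.1, z :: x.2)) (iota 1 n).

Definition factors_through (k : nat) (u : point -> seq bool) (h : point -> bool) :=
  forall x y, key k x = key k y -> u x = u y -> h x = h y.

(* [qvec q k v]: [v] lists the truth values of maximal quantified subformulas
   using [q] quantifiers in total, in a context of [k] variables. *)
Inductive qvec : nat -> nat -> (point -> seq bool) -> Prop :=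
| qvec_nil k : qvec 0 k (fun _ => [::])
| qvec_cons k q1 q2 b u h v : qvec q1 k.+1 u -> factors_through k.+1 u h ->
    qvec q2 k v -> qvec (q1 + q2).+1 k (fun x => quant_op b h x :: v x).

Lemma qvec_size q k v : qvec q k v ->
  (forall x y, size (v x) = size (v y)) /\ (forall x, size (v x) <= q).
Proof.
elim=> {q k v} // k q1 q2 b u h v _ _ _ _ [Heq Hle]; split => x /=.
  by move=> y; rewrite (Heq x y).
by have := Hle x; lia.
Qed.

Lemma qvec_cat q1 q2 k v1 v2 : qvec q1 k v1 -> qvec q2 k v2 ->
  qvec (q1 + q2) k (fun x => v1 x ++ v2 x).
Proof.
move=> Hv1; elim: Hv1 q2 v2 => {q1 k v1} // k q1 q1' b u h v Hu _ Hh _ IHv q2 v2 Hv2.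
by rewrite addSn -addnA; apply: qvec_cons Hu Hh (IHv _ _ Hv2).
Qed.

Definition qvec_le (q k : nat) (v : point -> seq bool) : Prop :=
  exists2 q', q' <= q & qvec q' k v.

Definition normal (q k : nat) (f : point -> bool) : Prop :=
  exists2 v, qvec_le q k v & factors_through k v f.

Lemma normal_key q k f : (forall x y, key k x = key k y -> f x = f y) -> normal q k f.
Proof.
by move=> Hf; exists (fun _ => [::]); [exists 0; last exact: qvec_nil | move=> x y /Hf].
Qed.

Lemma normal_le q q' k f : q <= q' -> normal q k f -> normal q' k f.
Proof.
by move=> Hq [v [q'' Hq'' Hv] Hf]; exists v => //; exists q'' => //; apply: leq_trans Hq.
Qed.

Lemma normal_comp q k f (g : bool -> bool) : normal q k f -> normal q k (fun x => g (f x)).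
Proof. by move=> [v Hv Hf]; exists v => // x y Hk /(Hf x y Hk) ->. Qed.

Lemma normal_comp2 q1 q2 k f1 f2 (g : bool -> bool -> bool) :
  normal q1 k f1 -> normal q2 k f2 -> normal (q1 + q2) k (fun x => g (f1 x) (f2 x)).
Proof.
move=> [v1 [q1' Hq1 Hv1] Hf1] [v2 [q2' Hq2 Hv2] Hf2].
exists (fun x => v1 x ++ v2 x); first by exists (q1' + q2'); [exact: leq_add | exact: qvec_cat].
move=> x y Hk /eqP; rewrite eqseq_cat; last exact: (qvec_size Hv1).1.
by case/andP => /eqP /(Hf1 x y Hk) -> /eqP /(Hf2 x y Hk) ->.
Qed.

Lemma normal_quant q k b h : normal q k.+1 h -> normal q.+1 k (quant_op b h).
Proof.
move=> [u [q' Hq Hu] Hh]; exists (fun x => [:: quant_op b h x]); last by move=> x y _ [].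
by exists (q' + 0).+1; [rewrite addn0 | apply: qvec_cons Hu Hh (qvec_nil _)].
Qed.

Lemma normal_den phi ctx : normal (nquant phi) (size ctx) (den ctx phi).
Proof.
elim: phi ctx => [t1 t2|t1 t2|t|p IH|p IHp q IHq|p IHp q IHq|y p IH|y p IH] ctx /=.
1-3: by apply: normal_key => x y; apply: den_atomic_key.
- exact: (normal_comp negb (IH ctx)).
- exact: (normal_comp2 andb (IHp ctx) (IHq ctx)).
- exact: (normal_comp2 orb (IHp ctx) (IHq ctx)).
- exact: (normal_quant true (IH (y :: ctx))).
- exact: (normal_quant false (IH (y :: ctx))).
Qed.

End NormalForm.

Definition bounded_by (T : Type) (P : T -> Prop) (B : nat) : Prop :=
  exists e : nat -> T, forall x, P x -> exists2 i, i < B & e i = x.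

Lemma bounded_by1 (T : Type) (x0 : T) : bounded_by (fun x => x = x0) 1.
Proof. by exists (fun _ => x0) => x ->; exists 0. Qed.

Lemma bounded_by_bool : bounded_by (fun _ : bool => True) 2.
Proof. by exists odd => b _; exists (nat_of_bool b); case: b. Qed.

Lemma bounded_byU (T : Type) (P Q : T -> Prop) B1 B2 :
  bounded_by P B1 -> bounded_by Q B2 -> bounded_by (fun x => P x \/ Q x) (B1 + B2).
Proof.
move=> [e1 H1] [e2 H2]; exists (fun i => if i < B1 then e1 i else e2 (i - B1)).
move=> x [/H1 [i Hi <-] | /H2 [i Hi <-]]; first by exists i; rewrite ?Hi //; lia.
by exists (i + B1); [lia | rewrite ltnNge leq_addl addnK].
Qed.

Lemma bounded_byX (T U : Type) (P : T -> Prop) (Q : U -> Prop) B1 B2 :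
  bounded_by P B1 -> bounded_by Q B2 -> bounded_by (fun z => P z.1 /\ Q z.2) (B1 * B2).
Proof.
move=> [e1 H1] [e2 H2]; exists (fun i => (e1 (i %% B1), e2 (i %/ B1))).
move=> [x y] /= [/H1 [i Hi <-] /H2 [j Hj <-]]; exists (j * B1 + i); first nia.
by rewrite modnMDl modn_small // divnMDl ?divn_small ?addn0 //; lia.
Qed.

Lemma bounded_by_sub (T : Type) (P Q : T -> Prop) B :
  (forall x, Q x -> P x) -> bounded_by P B -> bounded_by Q B.
Proof. by move=> HQP [e H]; exists e => x /HQP /H. Qed.

Lemma bounded_by_image (T U : Type) (P : T -> Prop) (Q : U -> Prop) (F : T -> U) B :
  bounded_by P B -> (forall y, Q y -> exists2 x, P x & F x = y) -> bounded_by Q B.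
Proof.
move=> [e H] HQ; exists (fun i => F (e i)) => y /HQ [x /H [i Hi <-] <-].
by exists i.
Qed.

Lemma odd_div_expn_addr i b R c : c < R -> odd ((i + b * 2 ^ R) %/ 2 ^ c) = odd (i %/ 2 ^ c).
Proof.
move=> Hc; rewrite -(subnK (ltnW Hc)) expnD mulnA addnC divnMDl ?expn_gt0 //.
by rewrite oddD oddM oddX subn_eq0 leqNgt Hc andbF.
Qed.

Lemma exists_bit_table (T : Type) (c : T -> nat) (h : T -> bool) R :
  (forall x y, c x = c y -> h x = h y) ->
  exists2 i, i < 2 ^ R & forall x, c x < R -> odd (i %/ 2 ^ c x) = h x.
Proof.
move=> Hch; elim: R => [|R [i Hi IH]]; first by exists 0 => // x.
have [[x0 Hx0]|Hno] := classic (exists x0, c x0 = R).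
- exists (i + h x0 * 2 ^ R); first by rewrite expnS; have := leq_b1 (h x0); nia.
  move=> x; rewrite ltnS leq_eqVlt => /orP [/eqP Ex|Hlt]; last by rewrite odd_div_expn_addr // IH.
  rewrite Ex addnC divnMDl ?expn_gt0 // divn_small // addn0 (Hch x x0) ?Hx0 //.
  by case: (h x0).
- exists i; first by rewrite expnS; lia.
  move=> x; rewrite ltnS leq_eqVlt => /orP [/eqP Ex|]; last exact: IH.
  by case: Hno; exists x.
Qed.

(* Binary digits of [s] below a leading 1, so that sequences of different sizes
   get different codes. *)
Definition seqb_code (s : seq bool) : nat := foldr (fun (b : bool) a => b + 2 * a) 1 s.

Lemma seqb_code_gt0 s : 0 < seqb_code s.
Proof. by elim: s => //= b s; lia. Qed.

Lemma seqb_code_lt s : seqb_code s < 2 ^ (size s).+1.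
Proof. by elim: s => //= b s IH; rewrite expnS; have := leq_b1 b; lia. Qed.

Lemma seqb_code_inj : injective seqb_code.
Proof.
elim=> [|b1 s1 IH] [|b2 s2] /=.
- by [].
- by have := seqb_code_gt0 s2; case: b2; lia.
- by have := seqb_code_gt0 s1; case: b1; lia.
- case/radix_inj => [||E /IH ->]; rewrite ?ltnS ?leq_b1 //.
  by case: b1 b2 E => -[].
Qed.

Fixpoint qvec_count (q k : nat) : nat :=
  if q is q'.+1 then
    1 + 2 * (qvec_count q' k.+1 * 2 ^ (key_bound k.+1 * 2 ^ q) * qvec_count q' k)
  else 1.

Section Count.
Variable n : nat.
Notation point := (n.-tuple bool * seq nat)%type.

Definition pair_code (j : nat) (u : point -> seq bool) (x : point) : nat :=
  key j x + key_bound j * seqb_code (u x).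

Lemma pair_code_inj j u x y : pair_code j u x = pair_code j u y -> key j x = key j y /\ u x = u y.
Proof. by case/radix_inj; rewrite ?key_lt // => -> /seqb_code_inj. Qed.

Lemma pair_code_lt j u m x : size (u x) <= m -> pair_code j u x < key_bound j * 2 ^ m.+1.
Proof.
move=> Hs; have Hk := key_lt j x.
have Hc : seqb_code (u x) < 2 ^ m.+1.
  by apply: leq_trans (seqb_code_lt _) _; rewrite leq_exp2l.
by rewrite /pair_code; nia.
Qed.

Lemma qvec_le_size q k (v : point -> seq bool) x : qvec_le q k v -> size (v x) <= q.
Proof. by move=> [q' Hq /qvec_size [_ /(_ x)]]; lia. Qed.

Lemma bounded_normal q j B : bounded_by (@qvec_le n q j) B ->
  bounded_by (@normal n q j) (B * 2 ^ (key_bound j * 2 ^ q.+1)).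
Proof.
move=> [eu Hu]; exists (fun i x => odd (i %/ B %/ 2 ^ pair_code j (eu (i %% B)) x)).
move=> h [u Hvu Hf]; have [i1 Hi1 Eu] := Hu u Hvu; subst u.
have [|i2 Hi2 Ei2] := @exists_bit_table _ (pair_code j (eu i1)) h (key_bound j * 2 ^ q.+1).
  by move=> x y /pair_code_inj [Hk Hv]; apply: Hf.
exists (i2 * B + i1); first nia.
rewrite modnMDl modn_small // divnMDl ?divn_small ?addn0; try lia.
apply: functional_extensionality => x.
by apply/Ei2/pair_code_lt; apply: qvec_le_size Hvu.
Qed.

Lemma qvec_le0 k (v : point -> seq bool) : qvec_le 0 k v -> v = fun _ => [::].
Proof. by move=> [q' Hq Hv]; case: Hv Hq => // *; lia. Qed.

Lemma qvec_leS q k (v : point -> seq bool) : qvec_le q.+1 k v -> v = (fun _ => [::]) \/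
  exists b h v', normal q k.+1 h /\ qvec_le q k v' /\ v = fun x => quant_op b h x :: v' x.
Proof.
move=> [q' Hq Hv]; case: Hv Hq => [k'|k' q1 q2 b u h v' Hu Hh Hv'] Hq; [by left | right].
exists b, h, v'; do !split => //; last by exists q2 => //; lia.
by exists u => //; exists q1 => //; lia.
Qed.

Lemma bounded_qvec q k : bounded_by (@qvec_le n q k) (qvec_count q k).
Proof.
elim: q k => [|q IH] k.
  by exists (fun _ _ => [::]) => v /qvec_le0 ->; exists 0.
pose cons_of (z : bool * ((point -> bool) * (point -> seq bool))) x :=
  quant_op z.1 z.2.1 x :: z.2.2 x.
have Hcons := bounded_by_image (F := cons_of)
  (Q := fun v => exists b h v', normal q k.+1 h /\ qvec_le q k v' /\ v = cons_of (b, (h, v')))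
  (bounded_byX bounded_by_bool (bounded_byX (bounded_normal (IH k.+1)) (IH k))).
apply: bounded_by_sub (bounded_byU (bounded_by1 (fun _ : point => [::])) (Hcons _)).
  by move=> v /qvec_leS.
by move=> v [b [h [v' [Hh [Hv' ->]]]]]; exists (b, (h, v')).
Qed.

End Count.

Definition den_count (q : nat) : nat := qvec_count q 0 * 2 ^ (key_bound 0 * 2 ^ q.+1).

Lemma key_bound_gt0 k : 0 < key_bound k.
Proof. by rewrite expn_gt0 /digit_base; lia. Qed.

Lemma key_bound_homo : {homo key_bound : k k' / k <= k'}.
Proof.
apply: (homo_leq leqnn leq_trans) => k.
rewrite /key_bound (@leq_trans (digit_base k.+1 ^ k.+2)) //.
  by rewrite leq_exp2r // /digit_base; lia.
by rewrite leq_pexp2l // /digit_base; lia.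
Qed.

Lemma expn2_le_expn4 q : 2 ^ q <= 4 ^ q.
Proof. by rewrite -[4]/(2 * 2) expnMn leq_pmulr ?expn_gt0. Qed.

Lemma qvec_count_le q k : qvec_count q k <= 2 ^ (2 * 4 ^ q * key_bound (k + q)).
Proof.
elim: q k => [|q IH] k /=; first by rewrite expn_gt0.
set T := key_bound (k + q.+1); set E := 2 * 4 ^ q * T.
have HT j : j <= k + q.+1 -> key_bound j <= T by move/key_bound_homo.
have HE j : j <= k.+1 -> qvec_count q j <= 2 ^ E.
  by move=> Hj; apply: leq_trans (IH j) _; rewrite leq_exp2l // leq_mul2l HT ?orbT //; lia.
have Hmid : 2 ^ (key_bound k.+1 * 2 ^ q.+1) <= 2 ^ (T * 2 ^ q.+1).
  by rewrite leq_exp2l // leq_mul2r HT ?orbT //; lia.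
have Hprod : qvec_count q k.+1 * 2 ^ (key_bound k.+1 * 2 ^ q.+1) * qvec_count q k
    <= 2 ^ (E + T * 2 ^ q.+1 + E).
  by rewrite !expnD; apply: leq_mul; [apply: leq_mul; [apply: HE | exact: Hmid] | apply: HE].
apply: (@leq_trans (2 ^ (E + T * 2 ^ q.+1 + E).+2)).
  move: Hprod (expn_gt0 2 (E + T * 2 ^ q.+1 + E)); rewrite !expnS.
  by move: (2 ^ _) (_ * _ * qvec_count q k) => P Y; lia.
rewrite leq_exp2l // /E !expnS.
have := key_bound_gt0 (k + q.+1); rewrite -/T.
have := expn_gt0 2 q; have := expn2_le_expn4 q; move: (2 ^ q) (4 ^ q) => P F; nia.
Qed.

Lemma den_count_le q : den_count q <= 2 ^ (4 ^ q.+1 * key_bound q).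
Proof.
rewrite /den_count.
apply: (@leq_trans (2 ^ (2 * 4 ^ q * key_bound q) * 2 ^ (key_bound q * 2 ^ q.+1))).
  apply: leq_mul; first exact: qvec_count_le.
  by rewrite leq_exp2l // leq_mul2r key_bound_homo ?orbT.
rewrite -expnD leq_exp2l // !expnS.
by have := expn2_le_expn4 q; nia.
Qed.

Lemma sqr_lt_expn2 L : 5 <= L -> L * L < 2 ^ L.
Proof.
elim: L => // L IH; rewrite leq_eqVlt => /orP [/eqP <- //|HL].
by have := IH HL; rewrite expnS; nia.
Qed.

Section Threshold.
Variables n L Q : nat.
Hypotheses (HL : 512 <= L) (HLn : 2 ^ L <= n < 2 ^ L.+1) (HQ : Q * L <= n).

Lemma digit_base_le : digit_base Q <= 2 ^ (L - 6).
Proof.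
have EL : 2 ^ L.+1 = 2 ^ 9 * 2 ^ (L - 8) by rewrite -expnD; congr (_ ^ _); lia.
have EL6 : 2 ^ (L - 6) = 4 * 2 ^ (L - 8) by rewrite -[4]/(2 ^ 2) -expnD; congr (_ ^ _); lia.
have H2 : 2 <= 2 ^ (L - 8) by rewrite -{1}(expn1 2) leq_exp2l //; lia.
by rewrite /digit_base EL6; move: HQ HLn; rewrite EL; nia.
Qed.

Lemma count_exponent_le : 4 ^ Q.+1 * key_bound Q <= 2 ^ n.-1.
Proof.
have E4 : 4 ^ Q.+1 = 2 ^ (Q.+1).*2 by rewrite -[4]/(2 ^ 2) -expnM; congr (_ ^ _); lia.
have HT : key_bound Q <= 2 ^ ((L - 6) * Q.+2) by rewrite expnM leq_exp2r // digit_base_le.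
have Hexp : (Q.+1).*2 + (L - 6) * Q.+2 <= n.-1.
  have [HQL|HQL] := leqP Q L; last by nia.
  by have := sqr_lt_expn2 (leq_trans (isT : 5 <= 512) HL); nia.
apply: leq_trans (leq_pexp2l _ Hexp) => //; rewrite expnD E4 leq_mul2l HT orbT //.
Qed.

Lemma den_count_lt : den_count Q + 2 < 2 ^ 2 ^ n.
Proof.
have Hn2 : 2 <= n.
  by apply: leq_trans (andP HLn).1; rewrite -{1}(expn1 2) leq_exp2l //; lia.
have Hn : 2 ^ n = (2 ^ n.-1).*2 by rewrite -mul2n -expnS prednK //; lia.
rewrite Hn -addnn expnD; set P := 2 ^ 2 ^ n.-1.
have HP : 4 <= P by rewrite -[4]/(2 ^ 2 ^ 1) !leq_exp2l //; lia.
have : den_count Q <= P.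
  by apply: leq_trans (den_count_le Q) _; rewrite leq_exp2l // count_exponent_le.
by nia.
Qed.

End Threshold.

Lemma INR_expn m k : INR (m ^ k) = (INR m ^ k)%R.
Proof. by elim: k => //= k IH; rewrite expnS mult_INR IH. Qed.

Lemma lt_div_log2R n L q : 0 < L -> 2 ^ L <= n ->
  (INR q < INR n / log2R (INR n))%R -> q * L < n.
Proof.
move=> HL HLn Hq.
have ln2 : (0 < ln 2)%R by rewrite -ln_1; apply: ln_increasing; lra.
have Hn : (2 ^ L <= INR n)%R.
  by rewrite -[2%R]/(INR 2) -INR_expn; apply/le_INR/leP.
have Hln : (INR L * ln 2 <= ln (INR n))%R.
  rewrite -ln_pow; last lra.
  have [Hlt|->] := Rle_lt_or_eq_dec _ _ Hn; last exact: Rle_refl.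
  by apply/Rlt_le/ln_increasing => //; apply: pow_lt; lra.
have HLlog : (INR L <= log2R (INR n))%R.
  rewrite /log2R; apply: (Rmult_le_reg_r (ln 2)) => //.
  by rewrite /Rdiv Rmult_assoc Rinv_l ?Rmult_1_r //; lra.
have HL1 : (1 <= INR L)%R by apply: (le_INR 1); apply/leP.
apply/ltP/INR_lt; rewrite mult_INR.
apply: (Rle_lt_trans _ (INR q * log2R (INR n))); first exact: Rmult_le_compat_l (pos_INR q) HLlog.
move: Hq; rewrite /Rdiv => /(Rmult_lt_compat_r (log2R (INR n))); rewrite Rmult_assoc Rinv_l; lra.
Qed.

Lemma exists_set_notin_family (T : finType) B (F : 'I_B -> {set T}) :
  B + 2 < 2 ^ #|T| -> exists A : {set T}, [/\ A != set0, A != setT & forall i, A != F i].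
Proof.
move=> HB; pose family := [set F i | i in 'I_B] :|: [set set0; setT].
have Hcard : #|family| <= B + 2.
  apply: leq_trans (leq_card_setU _ _) (leq_add _ _).
    by apply: leq_trans (leq_imset_card _ _) _; rewrite card_ord.
  by rewrite cards2; case: (_ != _).
have /subsetPn [A _ HA] : ~~ (powerset [set: T] \subset family).
  apply/negP => /subset_leq_card; rewrite card_powerset cardsT; lia.
exists A; move: HA; rewrite !inE negb_or => /andP [HF]; rewrite negb_or => /andP [-> ->].
by split=> // i; apply: contraNneq HF => ->; apply/imsetP; exists i.
Qed.

Lemma defines_den n (A : {set n.-tuple bool}) phi :
  defines A phi -> forall w, (w \in A) = den [::] phi (w, [::]).
Proof.
move=> [_ [Hin Hout]] w; apply/idP/idP => [/Hin /satP //|Hw].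
by apply/negPn/negP => /Hout; apply; apply/satP.
Qed.

Theorem mainTheorem20 :
  exists N : nat, forall n : nat, N <= n ->
    exists A : {set n.-tuple bool},
      A != set0 /\ A != setT /\
      forall phi : formula, defines A phi ->
        (INR n / log2R (INR n) <= INR (nquant phi))%R.
Proof.
exists (2 ^ 512) => n Hn; set L := trunc_log 2 n; set Q := n %/ L.
have Hn0 : 0 < n by apply: leq_trans Hn; rewrite expn_gt0.
have HLn : 2 ^ L <= n < 2 ^ L.+1 by apply: trunc_log_bounds.
have HL : 512 <= L by apply: trunc_log_max.
have [e He] := bounded_normal (bounded_qvec n Q 0).
have [|A [HA0 HAT HAe]] := exists_set_notin_family
  (fun i : 'I_(den_count Q) => [set w | e i (w, [::])]).
  by rewrite card_tuple card_bool; apply: den_count_lt HL HLn (leq_divM n L).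
exists A; split => //; split => // phi HA; apply: Rnot_lt_le => Hlt.
have Hq : nquant phi <= Q.
  by rewrite leq_divRL; [apply/ltnW/(lt_div_log2R _ (andP HLn).1 Hlt) | ]; lia.
have [|i Hi Ei] := He (den [::] phi) _.
  exact: normal_le Hq (normal_den n phi [::]).
apply/negP: (HAe (Ordinal Hi)); rewrite negbK; apply/eqP/setP => w.
by rewrite inE (defines_den HA) Ei.
Qed.
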